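(* Let $C_1,C_2,\alpha,\beta>0$ be constants and $d\ge1$, and let $k(t)$ solve the ODE $$k'(t)=C_1k(1-k^{\alpha})+C_2k^{d+1}e^{-\beta t}.$$ Then there exists $\delta>0$ such that if $0<k(0)<\delta$, then $k(t)\to1$ exponentially as $t\to\infty$, i.e. $|k(t)-1|\le Ce^{-\epsilon t}$ for some constants $C,\epsilon>0$.
   Context: In the paper $d\ge3$ denotes the spatial dimension. *)

From HB Require Import structures.
From mathcomp Require Import all_boot all_order all_algebra.
From mathcomp Require Import all_classical all_reals all_analysis.
Set Implicit Arguments. Unset Strict Implicit. Unset Printing Implicit Defensive.
Import Order.TTheory GRing.Theory Num.Theory.
Import numFieldNormedType.Exports.
Local Open Scope ring_scope.

Definition ode_rhs (R : realType) (C1 C2 alpha beta : R) (d : nat) (t x : R) : R :=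
  C1 * x * (1 - x `^ alpha) + C2 * x ^+ d.+1 * expR (- (beta * t)).

From HB Require Import structures.
From mathcomp Require Import all_boot all_order all_algebra.
From mathcomp Require Import all_classical all_reals all_analysis.
From mathcomp Require Import ring lra.
Import Order.TTheory GRing.Theory Num.Theory.
Import numFieldNormedType.Exports.
Local Open Scope classical_set_scope.
Local Open Scope ring_scope.

(* Everything rests on a comparison principle: if [u a < w a] and [u' < w'] at every
   time where [u] and [w] meet, then [u < w] afterwards (look at the first time
   [w - u] vanishes).  Writing [f] for the right-hand side, the barriers are:
   - the constant [k 0 / 2] from below, since [f t x > 0] for [0 < x < 1];
   - [delta * exp (L t)] from above on [[0, T]], since [f t x <= (C1 + C2 2^d) x] for
     [x <= 2], where [T] is so large that [f t 2 < 0] for [t >= T]; choosing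
     [delta * exp (L T) = 2] gives [k T < 2], and the constant [2] is a barrier
     after [T];
   - [1 - exp (- eps t)] and [1 + B exp (- eps t)]: for [k 0 / 2 <= x <= 2] the
     logistic term pulls [x] towards [1] at a rate proportional to [|x - 1|],
     while the forcing is [O(exp (- beta t))], so small [eps] works. *)

Section FirstCrossing.
Context {R : realType}.
Implicit Types (a b t D : R) (h : R -> R).

Lemma near_at_right_itv a (P : R -> Prop) :
  (\forall x \near a^'+, P x) -> exists2 e : R, 0 < e & forall x, a < x < a + e -> P x.
Proof.
move=> /nbhs_ballP[e /= e0 aeP]; exists e => // x /andP[ax xae].
by apply: aeP => //; rewrite /ball /= ltr_distlC; apply/andP; split; lra.
Qed.

Lemma is_derive_cvg_at_right {h t D} : is_derive t 1 h D -> h x @[x --> t^'+] --> h t.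
Proof.
move=> [dh _]; apply: cvg_at_right_filter.
exact/differentiable_continuous/derivable1_diffP.
Qed.

Lemma is_derive_gt0_near_left h t D :
  is_derive t 1 h D -> 0 < D -> \forall x \near t^'-, h x < h t.
Proof.
move=> [dh <-] D0.
have := cvgr_gt _ dh _ D0 => /(_ _)/nbhs_ballP[e /= e0 quot_gt0].
near=> x.
have xt : x - t < 0 by rewrite subr_lt0; near: x; exact: nbhs_left_lt.
have : 0 < (x - t)^-1 * (h x - h t).
  have := quot_gt0 (x - t); rewrite /= scaler1 subrK; apply; last by rewrite lt_eqF.
  rewrite /ball /= sub0r normrN ltr0_norm // opprB.
  by near: x; apply: nbhs_left_ltBl.
by rewrite nmulr_rgt0 ?invr_lt0 // subr_lt0.
Unshelve. all: end_near.
Qed.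

Lemma inf_le0_of_cvg_at_right (Z : set R) h :
  (forall z, Z z -> h z <= 0) -> has_inf Z ->
  h x @[x --> (inf Z)^'+] --> h (inf Z) -> h (inf Z) <= 0.
Proof.
move=> Z_le0 Z_inf h_right; rewrite leNgt; apply/negP => hinf_gt0.
have [e e0 he] := near_at_right_itv _ _ (cvgr_gt _ h_right _ hinf_gt0).
have [z Zz z_lt] := inf_adherent e0 Z_inf.
have hz := Z_le0 _ Zz.
have : 0 < h z.
  apply: he; rewrite z_lt andbT lt_neqAle (ge_inf Z_inf.2 Zz) andbT.
  by apply: contraTneq hz => <-; rewrite -ltNge.
by rewrite ltNge hz.
Qed.

Lemma near_left_lt0 h t : {for t, continuous h} -> h t <= 0 ->
  (h t = 0 -> exists2 D, 0 < D & is_derive t 1 h D) -> \forall x \near t^'-, h x < 0.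
Proof.
move=> h_cont; case: ltgtP => // [ht _ _ | ht _ /(_ ht)[D D0 hD]].
  exact: (cvgr_lt _ (cvg_at_left_filter h_cont)).
by rewrite -ht; exact: is_derive_gt0_near_left hD D0.
Qed.

Lemma gt0_of_derive_gt0_at_zeros h a b :
  h x @[x --> a^'+] --> h a ->
  (forall t, a < t <= b -> {for t, continuous h}) ->
  (forall t, a < t <= b -> h t = 0 -> exists2 D, 0 < D & is_derive t 1 h D) ->
  0 < h a -> forall t, a <= t <= b -> 0 < h t.
Proof.
move=> ha_right h_cont h_zero ha_gt0 t /andP[a_le_t t_le_b].
rewrite ltNge; apply/negP => ht.
pose Z := [set s | a <= s <= b /\ h s <= 0].
(* [tau] is the first time where [h] is nonpositive; [h] is positive before it and
   nonpositive at it, which the two previous lemmas make incompatible. *)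
have Z_inf : has_inf Z by split; [exists t; rewrite /Z /= a_le_t | exists a => s [/andP[]]].
set tau := inf Z.
have a_le_tau : a <= tau by apply: lb_le_inf; [case: Z_inf | move=> s [/andP[]]].
have tau_lb : lbound Z tau := ge_inf Z_inf.2.
have tau_le_t : tau <= t by apply: tau_lb; rewrite /Z /= a_le_t.
have h_gt0 r : a <= r < tau -> 0 < h r.
  move=> /andP[ar r_lt_tau]; rewrite ltNge; apply/negP => hr.
  have : tau <= r by apply: tau_lb; split; rewrite ?ar //; lra.
  by rewrite leNgt r_lt_tau.
have htau_le0 : h tau <= 0.
  apply: inf_le0_of_cvg_at_right => [z [] //|//|]; rewrite -/tau.
  have [<- // | tau_neq_a] := eqVneq a tau.
  by apply/cvg_at_right_filter/h_cont; rewrite lt_neqAle tau_neq_a a_le_tau; lra.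
have a_lt_tau : a < tau.
  by rewrite lt_neqAle a_le_tau andbT; apply: contraTneq htau_le0 => <-; rewrite -ltNge.
have tau_itv : a < tau <= b by rewrite a_lt_tau; lra.
have [x [hx ax x_lt_tau]] : exists x, [/\ h x < 0, a < x & x < tau].
  apply: (@filter_ex _ tau^'-); near=> x; split; near: x.
  - exact: near_left_lt0 (h_cont _ tau_itv) htau_le0 (h_zero _ tau_itv).
  - exact: nbhs_left_gt.
  - exact: nbhs_left_lt.
have := h_gt0 x; rewrite x_lt_tau ltW // => /(_ isT); lra.
Unshelve. all: end_near.
Qed.

Lemma comparison_lt (u w U W : R -> R) a b :
  u x @[x --> a^'+] --> u a -> w x @[x --> a^'+] --> w a ->
  (forall t, 0 < t -> is_derive t 1 u (U t)) ->
  (forall t, 0 < t -> is_derive t 1 w (W t)) ->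
  0 <= a -> u a < w a ->
  (forall t, a < t <= b -> u t = w t -> U t < W t) ->
  forall t, a <= t <= b -> u t < w t.
Proof.
move=> u_right w_right du dw a_ge0 uw_a touch t t_itv; rewrite -subr_gt0.
have d_wu t' : a < t' <= b -> is_derive t' 1 (w - u) (W t' - U t').
  by move=> /andP[at' _]; apply: is_deriveB; [apply: dw | apply: du]; lra.
apply: (gt0_of_derive_gt0_at_zeros (w - u) a b) t_itv.
- exact: cvgB.
- by move=> t' /d_wu[/derivable1_diffP/differentiable_continuous].
- move=> t' t'_itv /eqP; rewrite subr_eq0 => /eqP wu.
  by exists (W t' - U t'); [rewrite subr_gt0 touch | exact: d_wu].
- by rewrite subr_gt0.
Qed.

End FirstCrossing.

Section PowerBounds.
Context {R : realType}.
Implicit Types (x a : R).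

Lemma ln_le_subr1 x : 0 < x -> ln x <= x - 1.
Proof. by move=> x0; have := @le_ln1Dx R (x - 1); rewrite [1 + _]addrC subrK; apply; lra. Qed.

Lemma subr1_invr_le_ln x : 0 < x -> 1 - x^-1 <= ln x.
Proof.
move=> x0; have := @ln_le_subr1 x^-1; rewrite lnV ?posrE // invr_gt0; lra.
Qed.

Lemma powR_lt1 x a : 0 < a -> 0 <= x < 1 -> x `^ a < 1.
Proof.
move=> a0 /andP[x0 x1].
by have := gt0_ltr_powR a0 _ _ x1; rewrite powR1; apply; rewrite nnegrE.
Qed.

Lemma powR_gt1 x a : 0 < a -> 1 < x -> 1 < x `^ a.
Proof.
move=> a0 x1.
by have := gt0_ltr_powR a0 _ _ x1; rewrite powR1; apply; rewrite nnegrE; lra.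
Qed.

Lemma onem_powR_ge x a : 0 < a -> 0 < x <= 1 ->
  a * (1 - x) <= (1 + a) * (1 - x `^ a).
Proof.
move=> a0 /andP[x0 x1].
have xa_exp : x `^ a <= expR (- (a * (1 - x))).
  rewrite /powR gt_eqF // ler_expR -mulrN ler_pM2l // opprB.
  exact: ln_le_subr1.
have xa_mul : x `^ a * (1 + a * (1 - x)) <= 1.
  have gap0 : 0 <= 1 + a * (1 - x) by rewrite addr_ge0 // mulr_ge0 //; lra.
  apply: le_trans (ler_wpM2r gap0 xa_exp) _.
  rewrite -[leRHS](expR0 R) -(addNr (a * (1 - x))) expRD.
  by rewrite ler_wpM2l ?expR_ge0 ?expR_ge1Dx.
have xa_le1 : x `^ a <= 1.
  by apply: le_trans xa_exp _; rewrite expR_le1 oppr_le0 mulr_ge0 //; lra.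
have : 0 <= (1 - x `^ a) * (a * x) by rewrite mulr_ge0 ?subr_ge0 ?mulr_ge0 //; lra.
nra.
Qed.

Lemma powR_subr1_ge x a : 0 < a -> 1 <= x <= 2 -> a * (x - 1) <= 2 * (x `^ a - 1).
Proof.
move=> a0 /andP[x1 x2]; have x0 : 0 < x by lra.
have xa_ge : 1 + a * ln x <= x `^ a by rewrite /powR gt_eqF // mulrC expR_ge1Dx.
have ln_ge : x - 1 <= 2 * ln x.
  have := subr1_invr_le_ln _ x0; have := divff (lt0r_neq0 x0).
  have : 0 < x^-1 by rewrite invr_gt0.
  nra.
nra.
Qed.

Lemma expR_neg_lt_eventually {b q : R} : 0 < b -> 0 < q ->
  exists2 T : R, 0 < T & forall s, T <= s -> expR (- (b * s)) < q.
Proof.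
move=> b0 q0; exists ((`|ln q| + 1) / b) => [|s Ts].
  by rewrite divr_gt0 // ltr_wpDl.
rewrite -[ltRHS]lnK ?posrE // ltr_expR ltrNl.
apply: lt_le_trans (ler_wpM2l (ltW b0) Ts); rewrite mulrC divfK ?gt_eqF //.
by have := ler_norm (- ln q); rewrite normrN; lra.
Qed.

End PowerBounds.

Section OdeRhs.
Context {R : realType} {C1 C2 alpha beta : R} {d : nat}.
Hypotheses (C1_gt0 : 0 < C1) (C2_ge0 : 0 <= C2) (alpha_gt0 : 0 < alpha).
Local Notation f := (ode_rhs C1 C2 alpha beta d).
Implicit Types t x : R.

Lemma forcing_ge0 t x : 0 <= x -> 0 <= C2 * x ^+ d.+1 * expR (- (beta * t)).
Proof. by move=> x0; rewrite !mulr_ge0 ?exprn_ge0 ?expR_ge0. Qed.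

Lemma ode_rhs_gt0 t x : 0 < x < 1 -> 0 < f t x.
Proof.
move=> /andP[x0 x1]; have := forcing_ge0 t _ (ltW x0).
have : 0 < C1 * x * (1 - x `^ alpha).
  by rewrite !mulr_gt0 // subr_gt0 powR_lt1 // ltW.
rewrite /ode_rhs; lra.
Qed.

Lemma ode_rhs_le_linear t x : 0 <= beta -> 0 <= t -> 0 < x <= 2 ->
  f t x <= (C1 + C2 * 2 ^+ d) * x.
Proof.
move=> beta0 t0 /andP[x0 x2]; rewrite /ode_rhs.
have : 0 <= C1 * x * x `^ alpha by rewrite !mulr_ge0 ?powR_ge0 // ltW.
have : C2 * x ^+ d.+1 * expR (- (beta * t)) <= C2 * x ^+ d.+1.
  rewrite ler_piMr ?expR_le1 ?oppr_le0 ?mulr_ge0 ?exprn_ge0 //; exact: ltW.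
have : C2 * x ^+ d.+1 <= C2 * 2 ^+ d * x.
  rewrite exprSr mulrA ler_wpM2r ?ler_wpM2l ?lerXn2r ?nnegrE //; lra.
lra.
Qed.

Lemma ode_rhs_ge_lt1 t x : 0 < x < 1 ->
  C1 * x * (alpha * (1 - x)) <= (1 + alpha) * f t x.
Proof.
move=> /andP[x0 x1].
have : 0 <= (1 + alpha) * (C2 * x ^+ d.+1 * expR (- (beta * t))).
  by rewrite mulr_ge0 ?forcing_ge0 ?addr_ge0 ?ltW.
have : C1 * x * (alpha * (1 - x)) <= C1 * x * ((1 + alpha) * (1 - x `^ alpha)).
  by rewrite ler_wpM2l ?onem_powR_ge ?mulr_ge0 ?ltW // x0.
rewrite /ode_rhs; lra.
Qed.

Lemma ode_rhs_le_gt1 t x : 1 < x <= 2 ->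
  2 * f t x <= - (C1 * alpha * (x - 1)) + 2 * (C2 * 2 ^+ d.+1 * expR (- (beta * t))).
Proof.
move=> /andP[x1 x2]; rewrite /ode_rhs.
have : C1 * (alpha * (x - 1)) <= C1 * (2 * (x `^ alpha - 1)).
  by apply: ler_wpM2l; [exact: ltW | apply: powR_subr1_ge; rewrite // ltW // x2].
have : 0 <= C1 * (x `^ alpha - 1) * (x - 1).
  by rewrite !mulr_ge0 ?subr_ge0 ?ltW // powR_gt1.
have : C2 * x ^+ d.+1 <= C2 * 2 ^+ d.+1.
  by apply: ler_wpM2l => //; apply: lerXn2r; rewrite ?nnegrE ?ler0n // ltW // (lt_trans ltr01).
have := expR_ge0 (- (beta * t)); nra.
Qed.

End OdeRhs.

Lemma is_derive_expR_affine {R : realType} (p c e t : R) :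
  is_derive t 1 (fun s => p + c * expR (e * s)) (c * e * expR (e * t)).
Proof.
apply: is_derive_eq.
by rewrite add0r mul1r [e%:A]mulr1 -[c *: _]/(c * _) [expR _ * e]mulrC mulrA.
Qed.

Section OdeSolution.
Context {R : realType} {C1 C2 alpha beta : R} {d : nat}.
Hypotheses (C1_gt0 : 0 < C1) (C2_gt0 : 0 < C2) (alpha_gt0 : 0 < alpha) (beta_gt0 : 0 < beta).
Local Notation f := (ode_rhs C1 C2 alpha beta d).
Implicit Types (m eps B c L T t s : R).

Lemma ode_rhs2_lt0_eventually : exists2 T : R, 0 < T & forall s, T <= s -> f s 2 < 0.
Proof.
pose K := C2 * 2 ^+ d.+1.
have K_gt0 : 0 < K by rewrite mulr_gt0 ?exprn_gt0.
have gap_gt0 : 0 < 2 * C1 * (2 `^ alpha - 1).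
  by rewrite !mulr_gt0 // subr_gt0 powR_gt1 // ltr1n.
have [T T_gt0 decay] := expR_neg_lt_eventually beta_gt0 (divr_gt0 gap_gt0 K_gt0).
exists T => // s /decay; rewrite ltr_pdivlMr // /ode_rhs -/K; lra.
Qed.

Let rate_gt0 L : C1 + C2 * 2 ^+ d < L -> 0 < L.
Proof. by apply: le_lt_trans; rewrite addr_ge0 ?mulr_ge0 ?exprn_ge0 ?ltW. Qed.

Let expR_affine_cvg_at_right (p c e a : R) :
  (fun s : R => p + c * expR (e * s)) x @[x --> a^'+] --> p + c * expR (e * a).
Proof. exact: is_derive_cvg_at_right (is_derive_expR_affine p c e a). Qed.

Section Trajectory.
Context {k : R -> R}.
Hypothesis k_right0 : k x @[x --> 0^'+] --> k 0.
Hypothesis k_derive : forall t : R, 0 < t -> is_derive t 1 k (f t (k t)).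
Hypothesis k0_gt0 : 0 < k 0.

Lemma ode_sol_gt_const m : 0 < m < 1 -> m < k 0 -> forall t, 0 <= t -> m < k t.
Proof.
move=> /andP[m_gt0 m_lt1] m_lt t t_ge0.
apply: (comparison_lt (cst m) k (fun=> 0) (fun s => f s (k s)) 0 t) => //.
- exact: cvg_cst.
- by move=> s _ /= <-; apply: ode_rhs_gt0; rewrite ?ltW ?m_gt0.
- by rewrite lexx t_ge0.
Qed.

Lemma ode_sol_lt_growth L c T : C1 + C2 * 2 ^+ d < L -> k 0 < c ->
  c * expR (L * T) <= 2 -> forall t, 0 <= t <= T -> k t < c * expR (L * t).
Proof.
move=> L_gt c_gt cT_le2 t t_itv; rewrite -[ltRHS]add0r.
apply: (comparison_lt k (fun s => 0 + c * expR (L * s)) (fun s => f s (k s))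
  (fun s => c * L * expR (L * s)) 0 T) => //.
- by move=> s _; exact: is_derive_expR_affine.
- by rewrite mulr0 expR0 add0r mulr1.
move=> s /andP[s_gt0 s_le] ->; rewrite add0r.
have L_gt0 := rate_gt0 _ L_gt.
have x_gt0 : 0 < c * expR (L * s) by rewrite mulr_gt0 ?expR_gt0 // (lt_trans k0_gt0).
have x_le2 : c * expR (L * s) <= 2.
  by apply: le_trans cT_le2; rewrite ler_pM2l ?ler_expR ?ler_pM2l // (lt_trans k0_gt0).
apply: (@le_lt_trans _ _ ((C1 + C2 * 2 ^+ d) * (c * expR (L * s)))).
  by apply: ode_rhs_le_linear; rewrite ?x_gt0 ?x_le2 ?ltW.
by rewrite [c * L]mulrC -mulrA ltr_pM2r.
Qed.

Lemma ode_sol_lt2_after T : 0 < T -> (forall s, T <= s -> f s 2 < 0) ->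
  k T < 2 -> forall t, T <= t -> k t < 2.
Proof.
move=> T_gt0 rhs2_lt0 kT_lt2 t T_le_t.
apply: (comparison_lt k (cst 2) (fun s => f s (k s)) (fun=> 0) T t) => //.
- exact: is_derive_cvg_at_right (k_derive _ T_gt0).
- exact: cvg_cst.
- exact: ltW.
- by move=> s /andP[T_lt_s _] ->; apply: rhs2_lt0; exact: ltW.
- by rewrite T_le_t lexx.
Qed.

Lemma ode_sol_lt2 T : 0 < T -> (forall s, T <= s -> f s 2 < 0) ->
  k 0 < 2 * expR (- ((C1 + C2 * 2 ^+ d + 1) * T)) -> forall t, 0 <= t -> k t < 2.
Proof.
set L := _ + 1 => T_gt0 rhs2_lt0 k0_lt t t_ge0.
have L_gt : C1 + C2 * 2 ^+ d < L by rewrite ltrDl.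
have cT_le2 : 2 * expR (- (L * T)) * expR (L * T) <= 2.
  by rewrite -mulrA -expRD addNr expR0 mulr1.
have growth := ode_sol_lt_growth _ _ _ L_gt k0_lt cT_le2.
have [t_le_T | T_lt_t] := leP t T.
  apply: lt_le_trans (growth t _) _; first by rewrite t_ge0.
  apply: le_trans cT_le2; rewrite ler_pM2l ?(lt_trans k0_gt0) // ler_expR.
  by rewrite ler_pM2l ?rate_gt0.
apply: (ode_sol_lt2_after _ T_gt0 rhs2_lt0) (ltW T_lt_t).
by apply: lt_le_trans (growth T _) cT_le2; rewrite lexx ltW.
Qed.

Lemma ode_sol_gt_1Bexp m eps : 0 < m -> (forall t, 0 < t -> m < k t) ->
  0 < eps -> 2 * (1 + alpha) * eps <= C1 * m * alpha ->
  forall t, 0 <= t -> 1 - expR (- (eps * t)) < k t.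
Proof.
move=> m_gt0 k_gt_m eps_gt0 eps_le t t_ge0.
have -> : 1 - expR (- (eps * t)) = 1 + -1 * expR (- eps * t) by rewrite mulN1r mulNr.
apply: (comparison_lt (fun s => 1 + -1 * expR (- eps * s)) k
  (fun s => -1 * - eps * expR (- eps * s)) (fun s => f s (k s)) 0 t) => //.
- by move=> s _; exact: is_derive_expR_affine.
- by rewrite mulr0 expR0 mulr1 addrN.
- move=> s /andP[s_gt0 _] ks; rewrite mulN1r opprK.
  set E := expR (- eps * s) in ks *.
  have E_gt0 : 0 < E := expR_gt0 _.
  have m_lt_ks := k_gt_m _ s_gt0.
  have ks_lt1 : k s < 1 by rewrite -ks; lra.
  have ks_gt0 : 0 < k s := lt_trans m_gt0 m_lt_ks.
  have gap : C1 * k s * (alpha * (1 - k s)) <= (1 + alpha) * f s (k s).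
    by apply: ode_rhs_ge_lt1; rewrite ?ltW // ks_gt0.
  rewrite -(ltr_pM2l (_ : 0 < 1 + alpha)); last by rewrite addr_gt0.
  apply: lt_le_trans gap; have -> : 1 - k s = E by rewrite -ks; ring.
  have : 2 * (1 + alpha) * eps * E <= C1 * m * alpha * E by rewrite ler_pM2r.
  have : 0 < C1 * m * alpha * E by rewrite !mulr_gt0.
  have : C1 * m * alpha * E <= C1 * k s * alpha * E.
    by rewrite !ler_wpM2r ?ler_wpM2l ?ltW.
  lra.
- by rewrite lexx t_ge0.
Qed.

Lemma ode_sol_lt_1Dexp B eps : (forall t, 0 < t -> k t < 2) -> k 0 < 1 + B ->
  0 < eps -> eps <= beta -> 4 * eps <= C1 * alpha ->
  4 * (C2 * 2 ^+ d.+1) < C1 * alpha * B ->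
  forall t, 0 <= t -> k t < 1 + B * expR (- (eps * t)).
Proof.
move=> k_lt2 k0_lt eps_gt0 eps_le_beta eps_le B_gt t t_ge0; rewrite -mulNr.
have B_gt0 : 0 < B.
  have : 0 < C1 * alpha * B.
    by apply: le_lt_trans B_gt; rewrite !mulr_ge0 ?exprn_ge0 ?ltW.
  by rewrite pmulr_rgt0 // mulr_gt0.
apply: (comparison_lt k (fun s => 1 + B * expR (- eps * s)) (fun s => f s (k s))
  (fun s => B * - eps * expR (- eps * s)) 0 t) => //.
- by move=> s _; exact: is_derive_expR_affine.
- by rewrite mulr0 expR0 mulr1.
- move=> s /andP[s_gt0 _] ks.
  set E := expR (- eps * s) in ks *.
  have E_gt0 : 0 < E := expR_gt0 _.
  have ks_gt1 : 1 < k s by rewrite ks ltrDl mulr_gt0.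
  have gap : 2 * f s (k s) <=
      - (C1 * alpha * (k s - 1)) + 2 * (C2 * 2 ^+ d.+1 * expR (- (beta * s))).
    by apply: ode_rhs_le_gt1 => //; [exact: ltW | rewrite ks_gt1 ltW ?k_lt2].
  have : C2 * 2 ^+ d.+1 * expR (- (beta * s)) <= C2 * 2 ^+ d.+1 * E.
    apply: ler_wpM2l; first by rewrite mulr_ge0 ?exprn_ge0 ?ltW.
    by rewrite ler_expR mulNr lerN2 ler_pM2r.
  have : 4 * (C2 * 2 ^+ d.+1) * E < C1 * alpha * B * E by rewrite ltr_pM2r.
  have : 4 * eps * B * E <= C1 * alpha * B * E by rewrite !ler_pM2r.
  rewrite (_ : k s - 1 = B * E) in gap; last by rewrite ks; ring.
  lra.
- by rewrite lexx t_ge0.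
Qed.

Lemma ode_sol_exp_cvg1 : (forall t, 0 <= t -> k t < 2) ->
  exists C eps : R, [/\ 0 < C, 0 < eps &
    forall t : R, 0 <= t -> `|k t - 1| <= C * expR (- (eps * t))].
Proof.
move=> k_lt2; pose m := k 0 / 2.
have m_gt0 : 0 < m by rewrite divr_gt0.
have k0_lt2 : k 0 < 2 := k_lt2 0 (lexx 0).
have k_gt_m t : 0 <= t -> m < k t.
  by apply: ode_sol_gt_const; rewrite ?m_gt0 /= /m; have := k0_gt0; lra.
have C1alpha_gt0 : 0 < C1 * alpha by rewrite mulr_gt0.
pose K := C2 * 2 ^+ d.+1.
pose B := 1 + 4 * K / (C1 * alpha).
have B_ge1 : 1 <= B by rewrite lerDl divr_ge0 ?mulr_ge0 ?exprn_ge0 ?ltW.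
have B_gt : 4 * K < C1 * alpha * B.
  have -> : C1 * alpha * B = C1 * alpha + 4 * K.
    by rewrite /B; field; rewrite !lt0r_neq0.
  by rewrite ltrDr.
pose eps := Num.min beta (Num.min (C1 * m * alpha / (2 * (1 + alpha))) (C1 * alpha / 4)).
have eps_gt0 : 0 < eps by rewrite !lt_min beta_gt0 !divr_gt0 ?mulr_gt0 ?addr_gt0.
have eps_le_beta : eps <= beta by rewrite ge_min lexx.
have eps_le1 : 2 * (1 + alpha) * eps <= C1 * m * alpha.
  by rewrite mulrC -ler_pdivlMr ?mulr_gt0 ?addr_gt0 // !ge_min lexx orbT.
have eps_le2 : 4 * eps <= C1 * alpha by rewrite mulrC -ler_pdivlMr // !ge_min lexx !orbT.
exists B, eps; split => [||t t_ge0]; first lra; first exact: eps_gt0.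
have lower : 1 - expR (- (eps * t)) < k t.
  by apply: (ode_sol_gt_1Bexp m) => // s s_gt0; apply: k_gt_m; exact: ltW.
have upper : k t < 1 + B * expR (- (eps * t)).
  apply: ode_sol_lt_1Dexp => // [s s_gt0|]; first by apply: k_lt2; exact: ltW.
  lra.
have E_ge0 := expR_ge0 (- (eps * t)).
by rewrite ler_norml; apply/andP; split; nra.
Qed.

End Trajectory.

End OdeSolution.

Theorem lemma5p12 (R : realType) (C1 C2 alpha beta : R) (d : nat) :
  0 < C1 -> 0 < C2 -> 0 < alpha -> 0 < beta -> (1 <= d)%N ->
  exists2 delta : R, 0 < delta &
    forall k : R -> R,
      {within `[0, +oo[%classic, continuous k} ->
      (forall t : R, 0 < t -> is_derive t 1 k (ode_rhs C1 C2 alpha beta d t (k t))) ->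
      0 < k 0 < delta ->
      exists C : R, exists eps : R,
        [/\ 0 < C, 0 < eps &
            forall t : R, 0 <= t -> `|k t - 1| <= C * expR (- (eps * t))].
Proof.
(* The argument works for every [d], including [d = 0]. *)
move=> C1_gt0 C2_gt0 alpha_gt0 beta_gt0 _.
have [T T_gt0 rhs2_lt0] :=
  ode_rhs2_lt0_eventually (d := d) C1_gt0 C2_gt0 alpha_gt0 beta_gt0.
exists (2 * expR (- ((C1 + C2 * 2 ^+ d + 1) * T))); first by rewrite mulr_gt0 ?expR_gt0.
move=> k k_cont k_derive /andP[k0_gt0 k0_lt].
have k_right0 : k x @[x --> 0^'+] --> k 0.
  by have [] := (continuous_within_itvcyP 0 k).1 k_cont.
apply: (ode_sol_exp_cvg1 C1_gt0 C2_gt0 alpha_gt0 beta_gt0 k_right0 k_derive k0_gt0).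
exact: (ode_sol_lt2 C1_gt0 C2_gt0 beta_gt0 k_right0 k_derive k0_gt0 _ T_gt0 rhs2_lt0 k0_lt).
Qed.
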